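(* Let $G$ be a finite simple triangle-free graph without isolated vertices having a maximum open packing (a set of size $\rho_o(G)$) whose induced subgraph has all components isomorphic to $K_2$, and let $H$ be a finite bipartite graph of order at least two without isolated vertices. Then $$\gamma_{tR}(G\times H)\ge \rho_o(G)\gamma_{tR}(H).$$
   Context: An open packing of $G$ is a set $D$ of vertices with $N(u)\cap N(v)=\emptyset$ for all distinct $u,v\in D$ (open neighborhoods); $\rho_o(G)$ is the maximum size of an open packing. A total Roman dominating function on $H$ is a map $f:V(H)\to\{0,1,2\}$ such that every vertex with label 0 has a neighbor with label 2 and the subgraph induced by vertices with positive labels has no isolated vertices; $\gamma_{tR}(H)$ is the minimum of $\sum_v f(v)$ over such $f$. The direct product $G\times H$ has vertex set $V(G)\times V(H)$, with $(g,h)(g',h')$ an edge iff $gg'\in E(G)$ and $hh'\in E(H)$. *)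

From mathcomp Require Import all_boot.
Set Implicit Arguments. Unset Strict Implicit. Unset Printing Implicit Defensive.

Section Graphs.
Variable T : finType.
Variable e : rel T.

Definition simple_graph : Prop := symmetric e /\ irreflexive e.

Definition opn (v : T) : {set T} := [set u | e v u].

Definition no_isolated : Prop := forall v : T, exists u : T, e v u.

Definition triangle_free : Prop := forall x y z : T, ~ [&& e x y, e y z & e x z].

Definition bipartite : Prop :=
  exists c : T -> bool, forall x y : T, e x y -> c x != c y.

Definition open_packing (D : {set T}) : bool :=
  [forall u in D, forall v in D, (u != v) ==> [disjoint opn u & opn v]].

Definition rho_o : nat := \max_(D : {set T} | open_packing D) #|D|.

Definition tRDF (f : {ffun T -> 'I_3}) : bool :=
  [forall v, (val (f v) == 0) ==> [exists u, e v u && (val (f u) == 2)]] &&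
  [forall v, (val (f v) != 0) ==> [exists u, e v u && (val (f u) != 0)]].

Definition weight (f : {ffun T -> 'I_3}) : nat := \sum_(v : T) val (f v).

(* gamma_tR(G): minimum weight of a TRDF; the default 2*|V| is the weight of
   the all-2 function, which is a TRDF whenever G has no isolated vertices, so
   for such graphs this is exactly the minimum. *)
Definition gamma_tR : nat :=
  \big[minn/(2 * #|T|)]_(f : {ffun T -> 'I_3} | tRDF f) weight f.

End Graphs.

Definition direct_prod (T1 T2 : finType) (e1 : rel T1) (e2 : rel T2) : rel (T1 * T2) :=
  fun x y => e1 x.1 y.1 && e2 x.2 y.2.

(* Let D be a maximum open packing of G whose vertices are matched in pairs
   {u, u'} by edges of G, and let c be a proper 2-colouring of H.  Given a
   TRDF f of G x H and u in D, label each h in H by the largest value of f on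
   N(u) x {h} or on N(u') x {h}, according to the colour of h.  This is a TRDF
   of H: if the label of h is 0 then f vanishes at (u', h) (resp. (u, h)), and
   the neighbour of that vertex labelled 2 projects to a neighbour of h of the
   other colour whose label is 2; positive neighbours are found the same way.
   Its weight is at most the sum of f over N(u) x c^-1(true) and
   N(u') x c^-1(false); as u ranges over D these sets are pairwise disjoint
   because the open neighbourhoods of D are, so |D| gamma_tR(H) <= w(f). *)

From HB Require Import structures.
From mathcomp Require Import all_boot.
Set Implicit Arguments. Unset Strict Implicit.

HB.instance Definition _ := SemiGroup.isComLaw.Build nat minn minnA minnC.

Lemma gamma_tR_le_weight (T : finType) (e : rel T) (f : {ffun T -> 'I_3}) :
  tRDF e f -> gamma_tR e <= weight f.
Proof. by move=> tf; rewrite /gamma_tR (bigD1 f) //= geq_minl. Qed.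

Lemma gamma_tR_le_double_card (T : finType) (e : rel T) : gamma_tR e <= 2 * #|T|.
Proof. by apply: (big_rec (leq^~ _)) => // f m _ le_m; rewrite geq_min le_m orbT. Qed.

Lemma gamma_tR_ge (T : finType) (e : rel T) (k : nat) :
  k <= 2 * #|T| -> (forall f, tRDF e f -> k <= weight f) -> k <= gamma_tR e.
Proof.
move=> k_le2T k_le_tRDF; rewrite /gamma_tR.
by apply: (big_ind (leq k)) => // m n km kn; rewrite leq_min km kn.
Qed.

Lemma open_packing_sum_le (T : finType) (e : rel T) (D : {set T}) (F : T -> nat) :
  open_packing e D -> \sum_(u in D) \sum_(x | e u x) F x <= \sum_x F x.
Proof.
move=> /forallP packD; under eq_bigr do rewrite big_mkcond.
rewrite exchange_big /=; apply: leq_sum => x _.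
case: (pickP [pred u | (u \in D) && e u x]) => [v /andP[vD evx] | noD]; last first.
  by rewrite big1 // => u uD; case: ifP => // eux; have := noD u; rewrite /= uD eux.
rewrite (bigD1 v) //= evx big1 ?addn0 // => u /andP[uD neq_uv].
case: ifP => // eux; have := packD u; rewrite uD => /forallP/(_ v).
rewrite vD neq_uv => /= disj_uv.
by have := disjointFr disj_uv (x := x); rewrite !inE eux evx => /(_ isT).
Qed.

Section Mate.

Variables (T : finType) (e : rel T) (D : {set T}).
Hypothesis e_sym : symmetric e.
Hypothesis D_matched : forall u, u \in D -> #|[set v in D | e u v]| = 1.

Definition mate (u : T) : T :=
  if u \in D then odflt u [pick v in D | e u v] else u.

Lemma mate_spec u : u \in D -> (mate u \in D) && e u (mate u).
Proof.
move=> uD; rewrite /mate uD; case: pickP => [v /andP[vD euv] | noD] /=.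
  by rewrite vD euv.
have /eqP/cards1P[v Dv] := D_matched uD.
by have := set11 v; rewrite -Dv inE noD.
Qed.

Lemma mate_unique u v : u \in D -> v \in D -> e u v -> v = mate u.
Proof.
move=> uD vD euv; have /eqP/cards1P[w Dw] := D_matched uD.
have /andP[muD eumu] := mate_spec uD.
have : v \in [set v in D | e u v] by rewrite inE vD euv.
have : mate u \in [set v in D | e u v] by rewrite inE muD eumu.
by rewrite Dw !inE => /eqP-> /eqP->.
Qed.

Lemma mateK : involutive mate.
Proof.
move=> u; have [uD | uD] := boolP (u \in D); last by rewrite /mate (negPf uD) (negPf uD).
have /andP[muD eumu] := mate_spec uD.
by apply/esym/mate_unique; rewrite // e_sym.
Qed.

Lemma mate_in u : (mate u \in D) = (u \in D).
Proof.
have [uD | uD] := boolP (u \in D); first by have /andP[] := mate_spec uD.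
by rewrite /mate (negPf uD) (negPf uD).
Qed.

Lemma sum_mate_colour (I : finType) (c : I -> bool) (F : T -> I -> nat) :
  \sum_(u in D) \sum_i (if c i then F u i else F (mate u) i)
  = \sum_(u in D) \sum_i F u i.
Proof.
rewrite !(exchange_big _ _ _ (mem D)) /=; apply: eq_bigr => i _.
case: (c i) => //; rewrite [RHS](reindex_inj (inv_inj mateK)).
by apply: eq_bigl => u; rewrite mate_in.
Qed.

End Mate.

Section ProductProjection.

Variables (TG TH : finType) (eG : rel TG) (eH : rel TH).
Variable f : {ffun TG * TH -> 'I_3}.

Definition nbr_max (a : TG) (h : TH) : nat := \max_(x | eG a x) val (f (x, h)).

Definition nbr_sum (a : TG) (h : TH) : nat := \sum_(x | eG a x) val (f (x, h)).

Lemma nbr_max_le2 a h : nbr_max a h <= 2.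
Proof. by apply/bigmax_leqP => x _; rewrite -ltnS ltn_ord. Qed.

Lemma leq_nbr_max a h x : eG a x -> val (f (x, h)) <= nbr_max a h.
Proof. exact: leq_bigmax_cond. Qed.

Lemma nbr_max_le_sum a h : nbr_max a h <= nbr_sum a h.
Proof. by apply/bigmax_leqP => x eax; rewrite /nbr_sum (bigD1 x) //= leq_addr. Qed.

Hypothesis f_tRDF : tRDF (direct_prod eG eH) f.

Lemma nbr_max2_of_zero b h : val (f (b, h)) = 0 ->
  exists2 h', eH h h' & nbr_max b h' = 2.
Proof.
move=> fbh0; have /andP[/forallP f_zero _] := f_tRDF.
have /implyP/(_ _)/existsP := f_zero (b, h); rewrite fbh0 => /(_ isT).
case=> [[y h'] /andP[/andP[eby ehh'] /eqP fy2]].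
by exists h' => //; apply/anti_leq; rewrite nbr_max_le2 -fy2 leq_nbr_max.
Qed.

Lemma nbr_max_eq0 a b h : eG a b -> nbr_max a h = 0 ->
  exists2 h', eH h h' & nbr_max b h' = 2.
Proof.
move=> eab Mah0; apply: nbr_max2_of_zero; apply/eqP.
by rewrite -leqn0 -[leqRHS]Mah0 leq_nbr_max.
Qed.

Lemma nbr_max_pos b h : exists2 h', eH h h' & 0 < nbr_max b h'.
Proof.
have [fbh0 | fbh_pos] := posnP (val (f (b, h))).
  by have [h' ehh' M2] := nbr_max2_of_zero fbh0; exists h'; rewrite ?M2.
have /andP[_ /forallP f_pos] := f_tRDF.
have /implyP/(_ _)/existsP := f_pos (b, h); rewrite -lt0n fbh_pos => /(_ isT).
case=> [[y h'] /andP[/andP[eby ehh'] fy_pos]].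
by exists h' => //; rewrite (leq_trans _ (leq_nbr_max h' eby)) // lt0n.
Qed.

Variable c : TH -> bool.
Hypothesis c_proper : forall h h', eH h h' -> c h != c h'.

Definition fold_nbr (u v : TG) : {ffun TH -> 'I_3} :=
  [ffun h => inord (if c h then nbr_max u h else nbr_max v h)].

Lemma fold_nbrE u v h :
  val (fold_nbr u v h) = if c h then nbr_max u h else nbr_max v h.
Proof. by rewrite ffunE /= inordK // ltnS; case: (c h); apply: nbr_max_le2. Qed.

Lemma fold_nbr_tRDF u v : eG u v -> eG v u -> tRDF eH (fold_nbr u v).
Proof.
move=> euv evu.
have fold_adj h h' : eH h h' ->
    val (fold_nbr u v h') = if c h then nbr_max v h' else nbr_max u h'.
  by move/c_proper; rewrite fold_nbrE; case: (c h); case: (c h').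
apply/andP; split; apply/forallP => h; apply/implyP; rewrite fold_nbrE.
- case ch: (c h) => /eqP M0.
  + have [h' ehh' M2] := nbr_max_eq0 euv M0.
    by apply/existsP; exists h'; rewrite ehh' (fold_adj _ _ ehh') ch M2.
  + have [h' ehh' M2] := nbr_max_eq0 evu M0.
    by apply/existsP; exists h'; rewrite ehh' (fold_adj _ _ ehh') ch M2.
- move=> _; apply/existsP; case ch: (c h).
  + have [h' ehh' M_pos] := nbr_max_pos v h.
    by exists h'; rewrite ehh' (fold_adj _ _ ehh') ch -lt0n.
  + have [h' ehh' M_pos] := nbr_max_pos u h.
    by exists h'; rewrite ehh' (fold_adj _ _ ehh') ch -lt0n.
Qed.

Lemma weight_fold_nbr u v :
  weight (fold_nbr u v) <= \sum_h (if c h then nbr_sum u h else nbr_sum v h).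
Proof.
by apply: leq_sum => h _; rewrite fold_nbrE; case: (c h); apply: nbr_max_le_sum.
Qed.

End ProductProjection.

Lemma sum_nbr_sum_le_weight (TG TH : finType) (eG : rel TG) (D : {set TG})
    (f : {ffun TG * TH -> 'I_3}) :
  open_packing eG D -> \sum_(u in D) \sum_h nbr_sum eG f u h <= weight f.
Proof.
move=> packD; under eq_bigr do rewrite exchange_big /=.
apply: leq_trans (open_packing_sum_le _ packD) _.
by rewrite /weight pair_big; apply/eq_leq/eq_bigr => -[].
Qed.

Theorem theorem2p9 (TG TH : finType) (eG : rel TG) (eH : rel TH) :
  simple_graph eG -> triangle_free eG -> no_isolated eG ->
  (exists D : {set TG},
      [/\ open_packing eG D, #|D| = rho_o eG &
          forall u, u \in D -> #|[set v in D | eG u v]| = 1]) ->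
  simple_graph eH -> bipartite eH -> 2 <= #|TH| -> no_isolated eH ->
  rho_o eG * gamma_tR eH <= gamma_tR (direct_prod eG eH).
Proof.
move=> [eG_sym _] _ _ [D [packD <- D_matched]] _ [c c_proper] _ _.
apply: gamma_tR_ge => [|f f_tRDF].
  by rewrite card_prod mulnCA leq_mul ?max_card ?gamma_tR_le_double_card.
pose p := mate eG D.
have fold_tRDF u : u \in D -> tRDF eH (fold_nbr eG f c u (p u)).
  move=> uD; have /andP[_ eup] := mate_spec D_matched uD.
  by apply: fold_nbr_tRDF; rewrite // eG_sym.
rewrite -sum_nat_const; apply: leq_trans (sum_nbr_sum_le_weight f packD).
rewrite -(sum_mate_colour eG_sym D_matched c).
apply: leq_sum => u uD; apply: leq_trans (weight_fold_nbr _ _ _ _ _).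
exact: gamma_tR_le_weight (fold_tRDF u uD).
Qed.
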